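(* Let $\nabla$ be a metric connection on an anchored metric bundle $(E,\langle\cdot,\cdot\rangle,a_E)$ over $M$, with associated bracket $\circ=\circ^\nabla$. Then for all $e_1,e_2,e_3\in\Gamma(E)$, $$C^\nabla(e_1,e_2)e_3+C^\nabla(e_2,e_3)e_1+C^\nabla(e_3,e_1)e_2+\nabla_{\Delta_{e_3}e_2}e_1+\nabla_{\Delta_{e_1}e_3}e_2+\nabla_{\Delta_{e_2}e_1}e_3+Q(e_1,e_2,e_3)+\big(\mathcal{D}\langle e_1,e_3\rangle\big)\circ e_2$$ $$=e_1\circ(e_2\circ e_3)-(e_1\circ e_2)\circ e_3-e_2\circ(e_1\circ e_3).$$
   Context: Anchored metric bundle: vector bundle $E\to M$, pseudo-metric $\langle\cdot,\cdot\rangle$ (nondegenerate symmetric), bundle map $a_E:E\to TM$. Metric connection: $\mathbb{R}$-bilinear $\nabla$ with $\nabla_{fe_1}e_2=f\nabla_{e_1}e_2$, $\nabla_{e_1}(fe_2)=a_E(e_1)(f)e_2+f\nabla_{e_1}e_2$, $a_E(e_1)\langle e_2,e_3\rangle=\langle\nabla_{e_1}e_2,e_3\rangle+\langle e_2,\nabla_{e_1}e_3\rangle$. $\Delta$: $\langle\Delta_{e_2}e_1,e_3\rangle=\langle\nabla_{e_3}e_1,e_2\rangle$; $e_1\circ^\nabla e_2=\nabla_{e_1}e_2-\nabla_{e_2}e_1+\Delta_{e_2}e_1$. $\mathcal{D}$: $\langle\mathcal{D}(f),e\rangle=a_E(e)(f)$. $C^\nabla(e_1,e_2)=\nabla_{e_1}\nabla_{e_2}-\nabla_{e_2}\nabla_{e_1}-\nabla_{e_1\circ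 e_2}$. $Q$: $\langle Q(e_1,e_2,e_3),t\rangle=\langle C^\nabla(e_1,t)e_2,e_3\rangle+\langle C^\nabla(e_2,t)e_3,e_1\rangle+\langle C^\nabla(e_3,t)e_1,e_2\rangle$ for all $t\in\Gamma(E)$. *)

(* Algebraic model of an anchored metric bundle:
   F = the reals, A = C^oo(M) (a commutative F-algebra), V = Gamma(E)
   (an A-module). *)
From HB Require Import structures.
From mathcomp Require Import all_boot all_order all_algebra.
From mathcomp Require Import reals.
Set Implicit Arguments. Unset Strict Implicit. Unset Printing Implicit Defensive.
Import Order.TTheory GRing.Theory Num.Theory.
Local Open Scope ring_scope.

Section AMB.
Variables (F : realType) (A : comAlgType F) (V : lmodType A).

(* a_E : E -> TM, a bundle map; a e acts on functions as an F-linear derivation *)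
Definition anchor_ax (a : V -> A -> A) : Prop :=
  [/\ (forall e f g, a e (f + g) = a e f + a e g),
      (forall e (k : F) f, a e (k *: f) = k *: a e f),
      (forall e f g, a e (f * g) = a e f * g + f * a e g),
      (forall e1 e2 g, a (e1 + e2) g = a e1 g + a e2 g)
    & (forall (f : A) e g, a (f *: e) g = f * a e g)].

Definition metric_ax (p : V -> V -> A) : Prop :=
  [/\ (forall e1 e2, p e1 e2 = p e2 e1),
      (forall e1 e2 e3, p (e1 + e2) e3 = p e1 e3 + p e2 e3),
      (forall (f : A) e1 e2, p (f *: e1) e2 = f * p e1 e2)
    & (forall x, (forall t, p x t = 0) -> x = 0)].

Definition metric_connection (a : V -> A -> A) (p : V -> V -> A)
    (nab : V -> V -> V) : Prop :=
  [/\ (forall e1 e2 e3, nab (e1 + e2) e3 = nab e1 e3 + nab e2 e3),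
      (forall e1 e2 e3, nab e1 (e2 + e3) = nab e1 e2 + nab e1 e3),
      (forall (f : A) e1 e2, nab (f *: e1) e2 = f *: nab e1 e2),
      (forall (f : A) e1 e2, nab e1 (f *: e2) = a e1 f *: e2 + f *: nab e1 e2)
    & (forall e1 e2 e3, a e1 (p e2 e3) = p (nab e1 e2) e3 + p e2 (nab e1 e3))].

(* Delta : <Delta_{e2} e1, e3> = <nabla_{e3} e1, e2>;  Delta e2 e1 = Delta_{e2} e1 *)
Definition Delta_ax (p : V -> V -> A) (nab : V -> V -> V) (Delta : V -> V -> V) :=
  forall e1 e2 e3, p (Delta e2 e1) e3 = p (nab e3 e1) e2.

Definition D_ax (a : V -> A -> A) (p : V -> V -> A) (D : A -> V) :=
  forall f e, p (D f) e = a e f.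

Definition bracket (nab : V -> V -> V) (Delta : V -> V -> V) (e1 e2 : V) : V :=
  nab e1 e2 - nab e2 e1 + Delta e2 e1.

Definition curv (nab : V -> V -> V) (Delta : V -> V -> V) (e1 e2 e3 : V) : V :=
  nab e1 (nab e2 e3) - nab e2 (nab e1 e3) - nab (bracket nab Delta e1 e2) e3.

Definition Q_ax (p : V -> V -> A) (nab : V -> V -> V) (Delta : V -> V -> V)
    (Q : V -> V -> V -> V) :=
  forall e1 e2 e3 t,
    p (Q e1 e2 e3) t = p (curv nab Delta e1 t e2) e3
                     + p (curv nab Delta e2 t e3) e1
                     + p (curv nab Delta e3 t e1) e2.
End AMB.

From HB Require Import structures.
From mathcomp Require Import all_boot all_order all_algebra.
From mathcomp Require Import reals.
From mathcomp Require Import ring.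
Import Order.TTheory GRing.Theory Num.Theory.
Local Open Scope ring_scope.

(* Since the metric is nondegenerate, it suffices to compare the pairings of
   both sides with an arbitrary section t.  Metric compatibility rewrites each
   second-order term <nabla_x u, w> as a_E(x)<u, w> - <u, nabla_x w>, and the
   defining identities of Delta, D and Q turn every remaining Delta into a
   covariant derivative.  The one identity that is not a mere unfolding is
   Delta_x y + Delta_y x = D<x, y>: it trades nabla_{Delta_{e3} e1} for
   nabla_{D<e1,e3>} - nabla_{Delta_{e1} e3}.  After that the two pairings agree
   as polynomials in the remaining atoms, up to the symmetry of the metric. *)

Lemma morphN_of_morphD (U W : zmodType) (f : U -> W) :
  {morph f : x y / x + y} -> {morph f : x / - x}.
Proof.
move=> fD x; have f0 : f 0 = 0 by apply: (@addrI _ (f 0)); rewrite -fD !addr0.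
by apply/eqP; rewrite -addr_eq0 -fD addNr f0.
Qed.

Section JacobiatorIdentity.
Variables (F : realType) (A : comAlgType F) (V : lmodType A).
Variables (a : V -> A -> A) (p : V -> V -> A) (nab Delta : V -> V -> V).
Variables (D : A -> V) (Q : V -> V -> V -> V).

Local Notation br := (bracket nab Delta).
Local Notation C := (curv nab Delta).

Hypothesis anchorDr : forall e f g, a e (f + g) = a e f + a e g.
Hypothesis metricC : forall x y, p x y = p y x.
Hypothesis metricDl : forall x y z, p (x + y) z = p x z + p y z.
Hypothesis metric_nondeg : forall x, (forall t, p x t = 0) -> x = 0.
Hypothesis nabDl : forall x y z, nab (x + y) z = nab x z + nab y z.
Hypothesis nabDr : forall x y z, nab x (y + z) = nab x y + nab x z.
Hypothesis nab_metric :
  forall x y z, a x (p y z) = p (nab x y) z + p y (nab x z).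
Hypothesis metric_Deltal : forall x y z, p (Delta y x) z = p (nab z x) y.
Hypothesis metric_Dl : forall f e, p (D f) e = a e f.
Hypothesis metric_Q : forall x y z t,
  p (Q x y z) t = p (C x t y) z + p (C y t z) x + p (C z t x) y.

Lemma nabNl x y : nab (- x) y = - nab x y.
Proof. exact: morphN_of_morphD (fun u v => nabDl u v y) x. Qed.

Lemma nabNr x y : nab x (- y) = - nab x y.
Proof. exact: morphN_of_morphD (nabDr x) y. Qed.

Lemma metricNl x y : p (- x) y = - p x y.
Proof. exact: morphN_of_morphD (fun u v => metricDl u v y) x. Qed.

Lemma metricDr x y z : p x (y + z) = p x y + p x z.
Proof. by rewrite !(metricC x) metricDl. Qed.

Lemma metricNr x y : p x (- y) = - p x y.
Proof. by rewrite !(metricC x) metricNl. Qed.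

Lemma metric_Deltar x y z : p z (Delta y x) = p (nab z x) y.
Proof. by rewrite metricC metric_Deltal. Qed.

Lemma metric_Dr f e : p e (D f) = a e f.
Proof. by rewrite metricC metric_Dl. Qed.

Lemma metric_inj x y : (forall t, p x t = p y t) -> x = y.
Proof.
move=> pxy; apply/eqP; rewrite -subr_eq0; apply/eqP/metric_nondeg => t.
by rewrite metricDl metricNl pxy subrr.
Qed.

Lemma Delta_addC x y : Delta x y + Delta y x = D (p x y).
Proof.
apply: metric_inj => z.
by rewrite metricDl !metric_Deltal metric_Dl nab_metric addrC (metricC x).
Qed.

Lemma metric_nabl x u w : p (nab x u) w = a x (p u w) - p u (nab x w).
Proof. by rewrite nab_metric addrK. Qed.

Lemma anchor_metric x y z : a x (p y z) = p (nab x y) z + p (nab x z) y.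
Proof. by rewrite nab_metric (metricC y). Qed.

(* Both sides equal p (Delta u v) (Delta w x). *)
Lemma metric_nab_Delta x u v w :
  p (nab (Delta u v) x) w = p (nab (Delta w x) v) u.
Proof. by rewrite -metric_Deltal metric_Deltar. Qed.

Lemma jacobiator_identity e1 e2 e3 :
  C e1 e2 e3 + C e2 e3 e1 + C e3 e1 e2
    + nab (Delta e3 e2) e1 + nab (Delta e1 e3) e2 + nab (Delta e2 e1) e3
    + Q e1 e2 e3 + br (D (p e1 e3)) e2
  = br e1 (br e2 e3) - br (br e1 e2) e3 - br e2 (br e1 e3).
Proof.
have Delta31 : Delta e3 e1 = D (p e1 e3) - Delta e1 e3.
  by rewrite -Delta_addC [Delta e1 e3 + _]addrC addrK.
apply: metric_inj => t.
rewrite !metricDl metric_Q /curv /bracket Delta31.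
rewrite !(nabDl, nabDr, nabNl, nabNr, metricDl, metricDr, metricNl, metricNr,
          metric_Deltal, metric_Deltar).
rewrite !(metric_nabl _ (nab _ _)) !(metric_nabl _ (D _))
        !(metric_nabl _ (Delta _ _)).
rewrite !(metric_Deltal, metric_Dl, metric_Dr).
rewrite !(metric_nab_Delta _ t) !(anchor_metric _ e1 e3) !anchorDr.
(* [ring] cannot use the symmetry of [p]: orient the products of two
   derivatives with the [nab t] factor first. *)
rewrite !(metricC (nab _ _) (nab t _)).
ring.
Qed.

End JacobiatorIdentity.

Theorem proposition3p10 (F : realType) (A : comAlgType F) (V : lmodType A)
  (a : V -> A -> A) (p : V -> V -> A) (nab : V -> V -> V)
  (Delta : V -> V -> V) (D : A -> V) (Q : V -> V -> V -> V) :
  anchor_ax a -> metric_ax p -> metric_connection a p nab ->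
  Delta_ax p nab Delta -> D_ax a p D -> Q_ax p nab Delta Q ->
  forall e1 e2 e3 : V,
    curv nab Delta e1 e2 e3 + curv nab Delta e2 e3 e1 + curv nab Delta e3 e1 e2
    + nab (Delta e3 e2) e1 + nab (Delta e1 e3) e2 + nab (Delta e2 e1) e3
    + Q e1 e2 e3 + bracket nab Delta (D (p e1 e3)) e2
    = bracket nab Delta e1 (bracket nab Delta e2 e3)
      - bracket nab Delta (bracket nab Delta e1 e2) e3
      - bracket nab Delta e2 (bracket nab Delta e1 e3).
Proof.
move=> [anchorDr _ _ _ _] [metricC metricDl _ metric_nondeg].
move=> [nabDl nabDr _ _ nab_metric] metric_Delta metric_D metric_Q.
exact: jacobiator_identity.
Qed.
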